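(* Let $n\ge1$ and let $\mathcal{A},\mathcal{B}\subseteq D_n$. Then $\mathcal{A}$ and $\mathcal{B}$ are right-homometric if and only if $$\mathbf{iv}(A_+)+\mathbf{iv}(A_-)=\mathbf{iv}(B_+)+\mathbf{iv}(B_-)\quad\text{and}\quad \mathbf{ifunc}(A_+,A_-)=\mathbf{ifunc}(B_+,B_-).$$ Moreover, $\mathcal{A}$ and $\mathcal{B}$ are left-homometric if and only if $$\mathbf{iv}(A_+)+\mathbf{iv}(A_-)=\mathbf{iv}(B_+)+\mathbf{iv}(B_-)\quad\text{and}\quad \mathbf{ifunc}(I_0A_+,A_-)=\mathbf{ifunc}(I_0B_+,B_-).$$ (All equalities are equalities of functions $\mathbb{Z}_n\to\mathbb{Z}_{\ge0}$.)
   Context: $D_n$ is the set of pairs $(k,\epsilon)$, $k\in\mathbb{Z}_n$, $\epsilon\in\{1,-1\}$, with multiplication $(k,\epsilon)(l,\eta)=(k+\epsilon l,\epsilon\eta)$. Right interval: ${}^r\mathbf{int}(x,y)=x^{-1}y$, i.e. ${}^r\mathbf{int}((k_1,\epsilon_1),(k_2,\epsilon_2))=((k_2-k_1)/\epsilon_1,\epsilon_2/\epsilon_1)$; left interval: ${}^l\mathbf{int}(x,y)=yx^{-1}$, i.e. $(k_2-(\epsilon_2/\epsilon_1)k_1,\epsilon_2/\epsilon_1)$. For $\mathcal{A}\subseteq D_n$ and $g\in D_n$, ${}^r\mathbf{iv}(\mathcal{A})(g)=\#\{(x,y)\in\mathcal{A}^2: {}^r\mathbf{int}(x,y)=g\}$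 and ${}^l\mathbf{iv}(\mathcal{A})(g)=\#\{(x,y)\in\mathcal{A}^2:{}^l\mathbf{int}(x,y)=g\}$. Two subsets of $D_n$ are right-homometric (resp. left-homometric) if they have the same ${}^r\mathbf{iv}$ (resp. ${}^l\mathbf{iv}$). For $\mathcal{A}\subseteq D_n$ put $A_+=\{k\in\mathbb{Z}_n:(k,1)\in\mathcal{A}\}$ and $A_-=\{k\in\mathbb{Z}_n:(k,-1)\in\mathcal{A}\}$ (similarly $B_\pm$ for $\mathcal{B}$). For $A,B\subseteq\mathbb{Z}_n$: $\mathbf{ifunc}(A,B)(k)=\#\{(a,b)\in A\times B: b-a=k\}$, $\mathbf{iv}(A)=\mathbf{ifunc}(A,A)$, and $I_0A=\{-a:a\in A\}$. *)

(* Z_n is modelled by the ordinals 'I_n with arithmetic mod n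
   carried out on nat values; this works uniformly for every n >= 1
   (avoiding 'Z_n, which is degenerate for n = 1). *)
From mathcomp Require Import all_boot.
Set Implicit Arguments. Unset Strict Implicit. Unset Printing Implicit Defensive.

Definition zadd (n a b : nat) : nat := (a + b) %% n.
Definition zneg (n a : nat) : nat := (n - a %% n) %% n.
Definition zsub (n a b : nat) : nat := zadd n a (zneg n b).

(* Elements of D_n: pairs (k, s) with k : 'I_n, and sign s : bool,
   where s = true encodes epsilon = 1 and s = false encodes epsilon = -1.
   Computations are done on representatives (nat * bool). *)
Definition Dn (n : nat) := ('I_n * bool)%type.
Definition drep n (x : Dn n) : nat * bool := (val x.1, x.2).

Definition sact (n : nat) (e : bool) (l : nat) : nat := if e then l %% n else zneg n l.
Definition smul (e f : bool) : bool := e == f.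

Definition dmul (n : nat) (x y : nat * bool) : nat * bool :=
  (zadd n x.1 (sact n x.2 y.1), smul x.2 y.2).
Definition dinv (n : nat) (x : nat * bool) : nat * bool :=
  (zneg n (sact n x.2 x.1), x.2).

Definition rint n (x y : Dn n) : nat * bool := dmul n (dinv n (drep x)) (drep y).
Definition lint n (x y : Dn n) : nat * bool := dmul n (drep y) (dinv n (drep x)).

Definition riv n (A : {set Dn n}) (g : Dn n) : nat :=
  #|[set xy : Dn n * Dn n | (xy.1 \in A) && (xy.2 \in A) && (rint xy.1 xy.2 == drep g)]|.
Definition liv n (A : {set Dn n}) (g : Dn n) : nat :=
  #|[set xy : Dn n * Dn n | (xy.1 \in A) && (xy.2 \in A) && (lint xy.1 xy.2 == drep g)]|.

Definition rhomometric n (A B : {set Dn n}) : Prop := forall g, riv A g = riv B g.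
Definition lhomometric n (A B : {set Dn n}) : Prop := forall g, liv A g = liv B g.

Definition Aplus n (A : {set Dn n}) : {set 'I_n} := [set k | (k, true) \in A].
Definition Aminus n (A : {set Dn n}) : {set 'I_n} := [set k | (k, false) \in A].

Definition ifunc n (A B : {set 'I_n}) (k : 'I_n) : nat :=
  #|[set ab : 'I_n * 'I_n | (ab.1 \in A) && (ab.2 \in B) && (zsub n ab.2 ab.1 == val k)]|.
Definition iv n (A : {set 'I_n}) : 'I_n -> nat := ifunc A A.

Definition I0 n (A : {set 'I_n}) : {set 'I_n} :=
  [set k : 'I_n | [exists a in A, val k == zneg n (val a)]].

(* Writing x = (a, e) and y = (b, f), the interval x^-1 y has sign e f and
   translation part e (b - a), while y x^-1 has translation part b - a when
   e = f and b + a otherwise.  Counting pairs sign by sign, the intervals of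
   sign +1 are counted by iv(A+) + iv(A-) on both sides; those of sign -1 come
   from the pairs of signs (+,-) and (-,+), which contribute equally, giving
   twice ifunc(A+, A-) on the right and, since b + a = b - (-a), twice
   ifunc(I0 A+, A-) on the left. *)
From mathcomp Require Import all_boot.
Set Implicit Arguments. Unset Strict Implicit. Unset Printing Implicit Defensive.

Lemma card_set_pairs (T1 T2 : finType) (P : T1 * T2 -> bool) :
  #|[set p | P p]| = \sum_a \sum_b P (a, b).
Proof.
rewrite -sum1dep_card big_mkcond /= pair_bigA /=.
by apply: eq_bigr => -[a b] _; case: (P (a, b)).
Qed.

Lemma sum_prod_bool (T : finType) (F : T * bool -> nat) :
  \sum_x F x = \sum_k (F (k, true) + F (k, false)).
Proof.
rewrite (eq_bigr (fun p => F (p.1, p.2))); last by case.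
rewrite -(pair_bigA _ (fun k e => F (k, e))) /=.
by apply: eq_bigr => k _; rewrite big_bool.
Qed.

Section Dihedral.
Variable n : nat.
Hypothesis n_gt0 : 0 < n.

Lemma zneg_mod a : zneg n (a %% n) = zneg n a.
Proof. by rewrite /zneg modn_mod. Qed.

Lemma modn_zneg a : zneg n a %% n = zneg n a.
Proof. exact: modn_mod. Qed.

Lemma znegK a : zneg n (zneg n a) = a %% n.
Proof.
rewrite /zneg; have := ltn_pmod a n_gt0; set r := a %% n => lt_r_n.
have [->|r_gt0] := posnP r; first by rewrite subn0 modnn mod0n subn0 modnn.
have sub_small : (n - r) %% n = n - r by rewrite modn_small // ltn_subrL n_gt0 r_gt0.
by rewrite !sub_small subKn ?modn_small // ltnW.
Qed.

Lemma rint_eq (x y : Dn n) :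
  rint x y = (if x.2 then zsub n (val y.1) (val x.1) else zsub n (val x.1) (val y.1),
              x.2 == y.2).
Proof.
case: x y => [a []] [b f]; rewrite /rint /dmul /dinv /drep /sact /smul /=.
  by rewrite zneg_mod /zsub /zadd modnDmr addnC.
by rewrite znegK /zsub /zadd modnDml.
Qed.

Lemma lint_eq (x y : Dn n) :
  lint x y = (if x.2 == y.2 then zsub n (val y.1) (val x.1) else zadd n (val y.1) (val x.1),
              x.2 == y.2).
Proof.
case: x y => [a []] [b []]; rewrite /lint /dmul /dinv /drep /sact /smul /=.
- by rewrite zneg_mod modn_zneg.
- by rewrite znegK !modn_mod /zadd modnDmr.
- by rewrite znegK !modn_mod /zadd modnDmr.
- by rewrite znegK modn_zneg.
Qed.

Lemma ifunc_sum (P Q : {set 'I_n}) k :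
  ifunc P Q k = \sum_a \sum_b ((a \in P) && (b \in Q) && (zsub n b a == k)).
Proof. exact: card_set_pairs. Qed.

Lemma ifunc_sum_swap (P Q : {set 'I_n}) k :
  ifunc P Q k = \sum_a \sum_b ((a \in Q) && (b \in P) && (zsub n a b == k)).
Proof.
rewrite ifunc_sum exchange_big; apply: eq_bigr => a _; apply: eq_bigr => b _.
by rewrite (andbC (b \in P)).
Qed.

Definition opp_ord (i : 'I_n) : 'I_n := Ordinal (ltn_pmod (n - i %% n) n_gt0).

Lemma opp_ordK : involutive opp_ord.
Proof. by move=> i; apply: val_inj; rewrite -[RHS](modn_small (ltn_ord i)); exact: znegK. Qed.

Lemma in_I0 (P : {set 'I_n}) i : (i \in I0 P) = (opp_ord i \in P).
Proof.
rewrite inE; apply/existsP/idP => [[a /andP [aP /eqP i_opp_a]]|iP].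
  have -> : i = opp_ord a by apply: val_inj; exact: i_opp_a.
  by rewrite opp_ordK.
exists (opp_ord i); rewrite iP; apply/eqP.
exact: esym (congr1 val (opp_ordK i)).
Qed.

Lemma ifunc_I0_sum (P Q : {set 'I_n}) k :
  ifunc (I0 P) Q k = \sum_a \sum_b ((a \in P) && (b \in Q) && (zadd n b a == k)).
Proof.
rewrite ifunc_sum (reindex_inj (inv_inj opp_ordK)) /=.
apply: eq_bigr => a _; apply: eq_bigr => b _.
by rewrite in_I0 opp_ordK /zsub [zneg n _]znegK modn_small.
Qed.

Lemma sum_Dn_pairs (F : Dn n -> Dn n -> nat) :
  \sum_x \sum_y F x y = \sum_a \sum_b
    (F (a, true) (b, true) + F (a, true) (b, false)
     + F (a, false) (b, true) + F (a, false) (b, false)).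
Proof.
rewrite sum_prod_bool; under eq_bigr do rewrite !sum_prod_bool.
apply: eq_bigr => a _; rewrite -big_split /=.
by apply: eq_bigr => b _; rewrite !addnA.
Qed.

Lemma riv_pos (A : {set Dn n}) k :
  riv A (k, true) = iv (Aplus A) k + iv (Aminus A) k.
Proof.
rewrite /riv card_set_pairs sum_Dn_pairs /iv ifunc_sum ifunc_sum_swap -big_split.
apply: eq_bigr => a _; rewrite -big_split; apply: eq_bigr => b _.
by rewrite /= !rint_eq /drep /= !xpair_eqE !inE /= !andbF !andbT !addn0.
Qed.

Lemma riv_neg (A : {set Dn n}) k :
  riv A (k, false) = (ifunc (Aplus A) (Aminus A) k).*2.
Proof.
rewrite /riv card_set_pairs sum_Dn_pairs -addnn {2}ifunc_sum_swap ifunc_sum -big_split.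
apply: eq_bigr => a _; rewrite -big_split; apply: eq_bigr => b _.
by rewrite /= !rint_eq /drep /= !xpair_eqE !inE /= !andbF !andbT addn0 add0n.
Qed.

Lemma liv_pos (A : {set Dn n}) k :
  liv A (k, true) = iv (Aplus A) k + iv (Aminus A) k.
Proof.
rewrite /liv card_set_pairs sum_Dn_pairs /iv !ifunc_sum -big_split.
apply: eq_bigr => a _; rewrite -big_split; apply: eq_bigr => b _.
by rewrite /= !lint_eq /drep /= !xpair_eqE !inE /= !andbF !andbT !addn0.
Qed.

Lemma liv_neg (A : {set Dn n}) k :
  liv A (k, false) = (ifunc (I0 (Aplus A)) (Aminus A) k).*2.
Proof.
rewrite /liv card_set_pairs sum_Dn_pairs -addnn ifunc_I0_sum.
rewrite [X in _ = _ + X]exchange_big -big_split.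
apply: eq_bigr => a _; rewrite -big_split; apply: eq_bigr => b _.
rewrite /= !lint_eq /drep /= !xpair_eqE !inE /= !andbF !andbT addn0 add0n.
by rewrite /zadd [b + a]addnC (andbC ((b, true) \in A)).
Qed.

End Dihedral.

Lemma eq_on_signs (T : Type) (f g : T * bool -> nat) (p1 p2 q1 q2 : T -> nat) :
  (forall k, f (k, true) = p1 k) -> (forall k, f (k, false) = (q1 k).*2) ->
  (forall k, g (k, true) = p2 k) -> (forall k, g (k, false) = (q2 k).*2) ->
  (forall x, f x = g x) <-> (forall k, p1 k = p2 k) /\ (forall k, q1 k = q2 k).
Proof.
move=> fp fq gp gq; split => [eq_fg|[eq_p eq_q] [k []]].
  split=> k; first by rewrite -fp -gp eq_fg.
  by apply/eqP; rewrite -(inj_eq double_inj) -fq -gq eq_fg.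
- by rewrite fp gp eq_p.
- by rewrite fq gq eq_q.
Qed.

Theorem mainTheorem2 (n : nat) (hn : 1 <= n) (A B : {set Dn n}) :
  (rhomometric A B <->
     ((forall k : 'I_n, iv (Aplus A) k + iv (Aminus A) k = iv (Aplus B) k + iv (Aminus B) k)
      /\ (forall k : 'I_n, ifunc (Aplus A) (Aminus A) k = ifunc (Aplus B) (Aminus B) k)))
  /\
  (lhomometric A B <->
     ((forall k : 'I_n, iv (Aplus A) k + iv (Aminus A) k = iv (Aplus B) k + iv (Aminus B) k)
      /\ (forall k : 'I_n, ifunc (I0 (Aplus A)) (Aminus A) k = ifunc (I0 (Aplus B)) (Aminus B) k))).
Proof.
split; apply: eq_on_signs.
- exact: riv_pos.
- exact: riv_neg.
- exact: riv_pos.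
- exact: riv_neg.
- exact: liv_pos.
- exact: liv_neg.
- exact: liv_pos.
- exact: liv_neg.
Qed.
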